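(* For any valid threshold vector $t$, any sparsified weight vector $\tilde w$ and any integral assignment $\sigma:J\to[m]$, the optimal value of the linear program minimizing $\mathrm{LP}_t(\tilde w;x,y,z)$ subject to (OLB1)–(OLB5) is at most $\sum_{i=1}^m h_t(\tilde w;\mathrm{load}_\sigma(i))$.
   Context: Jobs $J$, machines $[m]$, processing times $p_{ij}\ge0$; $\mathrm{load}_\sigma(i)=\sum_{j:\sigma(j)=i}p_{ij}$. Fix $\delta>0$ and $P=\{\min\{\lceil(1+\delta)^s\rceil,m\}:s\in\mathbb{Z}_{\ge0}\}$; for $\ell\in P$, $\mathrm{next}(\ell)$ is the smallest element of $P$ larger than $\ell$ if $\ell<m$, and $\mathrm{next}(m)=m+1$. A threshold vector $t\in\mathbb{R}^P$ (with $t_{m+1}:=0$) is valid if $t_\ell\ge t_{\mathrm{next}(\ell)}$ for all $\ell\in P$. A sparsified weight vector $\tilde w$ arises from a non-increasing $w\in\mathbb{R}^m_{\ge0}$ by $\tilde w_i=w_i$ for $i\in P$ and $\tilde w_i=w_{\mathrm{next}(\ell)}$ for $\ell\in P$, $\ell<i<\mathrm{next}(\ell)$; $\tilde w_{m+1}:=0$. $h_t(\tilde w;a)=\sum_{\ell\in P}(\tilde w_\ell-\tilde w_{\mathrm{next}(\ell)})(a-t_\ell)^+$. Variables $x_{ij},z^{(\ell)}_{ij},y^{(\ell)}_{ij}\ge0$ ($i\in[m],j\in J,\ell\in P$), $z^{(m+1)}_{ij}:=0$. (OLB1) $\sum_ix_{ij}=1$; (OLB2) $x_{ij}=z^{(\ell)}_{ij}+y^{(\ell)}_{ij}$;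 (OLB3) $z^{(\mathrm{next}(\ell))}_{ij}\le z^{(\ell)}_{ij}$; (OLB4) $\sum_jp_{ij}(z^{(\ell)}_{ij}-z^{(\mathrm{next}(\ell))}_{ij})\le t_\ell-t_{\mathrm{next}(\ell)}$; (OLB5) $p_{ij}y^{(\ell)}_{ij}\ge(p_{ij}-t_\ell)x_{ij}$, all for all applicable $i,j,\ell$. Objective $\mathrm{LP}_t(\tilde w;x,y,z)=\sum_i\sum_{\ell\in P}\sum_j(\tilde w_\ell-\tilde w_{\mathrm{next}(\ell)})p_{ij}y^{(\ell)}_{ij}$. *)

From HB Require Import structures.
From mathcomp Require Import all_boot all_order all_algebra.
From mathcomp Require Import boolp reals.
Set Implicit Arguments. Unset Strict Implicit. Unset Printing Implicit Defensive.
Import Order.TTheory GRing.Theory Num.Theory.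
Local Open Scope ring_scope.

Section OLB.
Variables (R : realType) (delta : R) (m : nat).

Definition inP (ell : nat) : Prop :=
  exists s : nat, (ell%:Z) = Order.min (Num.ceil ((1 + delta) ^+ s)) (m%:Z).
Definition inPb (ell : nat) : bool := `[< inP ell >].

(* next(ell): smallest element of P larger than ell if ell < m (all elements
   of P lie in [1,m], so it is searched in (ell, m]); next(m) = m+1. *)
Definition nextP (ell : nat) : nat :=
  if (ell < m)%N then nth m.+1 [seq k <- iota ell.+1 (m - ell) | inPb k] 0
  else m.+1.

Definition prevP (i : nat) : nat := last 0%N [seq k <- iota 0 i | inPb k].

Definition text (t : nat -> R) (ell : nat) : R := if ell == m.+1 then 0 else t ell.

Definition valid_threshold (t : nat -> R) : Prop :=
  forall ell, inPb ell -> text t (nextP ell) <= text t ell.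

Definition weight_vector (w : nat -> R) : Prop :=
  (forall i, (1 <= i <= m)%N -> 0 <= w i) /\
  (forall i k, (1 <= i)%N -> (i <= k <= m)%N -> w k <= w i).

Definition sparsify (w : nat -> R) (i : nat) : R :=
  if i == m.+1 then 0
  else if inPb i then w i
  else w (nextP (prevP i)).

Definition h_t (t : nat -> R) (wt : nat -> R) (a : R) : R :=
  \sum_(ell < m.+1 | inPb ell) (wt ell - wt (nextP ell)) * Num.max (a - t ell) 0.

Variable J : finType.

Definition load (p : 'I_m -> J -> R) (sigma : J -> 'I_m) (i : 'I_m) : R :=
  \sum_(j | sigma j == i) p i j.

Definition zext (z : nat -> 'I_m -> J -> R) (ell : nat) (i : 'I_m) (j : J) : R :=
  if ell == m.+1 then 0 else z ell i j.

Definition OLB_feasible (p : 'I_m -> J -> R) (t : nat -> R)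
  (x : 'I_m -> J -> R) (y z : nat -> 'I_m -> J -> R) : Prop :=
  [/\ (forall i j, 0 <= x i j) /\
      (forall ell i j, inPb ell -> 0 <= z ell i j /\ 0 <= y ell i j),
      (* OLB1 *) (forall j, \sum_(i < m) x i j = 1) /\
      (* OLB2 *) (forall ell i j, inPb ell -> x i j = z ell i j + y ell i j),
      (* OLB3 *) (forall ell i j, inPb ell -> zext z (nextP ell) i j <= z ell i j),
      (* OLB4 *) (forall ell i, inPb ell ->
                   \sum_j p i j * (z ell i j - zext z (nextP ell) i j)
                     <= text t ell - text t (nextP ell)) &
      (* OLB5 *) (forall ell i j, inPb ell ->
                   p i j * y ell i j >= (p i j - t ell) * x i j)].

Definition LP_obj (p : 'I_m -> J -> R) (wt : nat -> R)
  (y : nat -> 'I_m -> J -> R) : R :=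
  \sum_(i < m) \sum_(ell < m.+1 | inPb ell) \sum_j
     (wt ell - wt (nextP ell)) * p i j * y ell i j.

End OLB.

(* Keep x = sigma integral and split every job j on machine i = sigma j at the
   same fraction c_l(i) = min(1, t_l / L_i), L_i the load of i: z^(l) is the share
   of the load below the threshold t_l, y^(l) the share above it. The y-cost of
   machine i at level l is then L_i (1 - c_l(i)) = (L_i - t_l)^+, so the objective
   equals the bound exactly, and (OLB3)-(OLB5) reduce to facts about
   L_i c_l(i) = min(L_i, t_l): it is monotone in t_l, its increments are at most
   those of t, and p_ij c_l(i) <= min(L_i, t_l) <= t_l. *)
From HB Require Import structures.
From mathcomp Require Import all_boot all_order all_algebra.
From mathcomp Require Import boolp reals.
From mathcomp Require Import ring lra zify.
Set Implicit Arguments. Unset Strict Implicit. Unset Printing Implicit Defensive.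
Import Order.TTheory GRing.Theory Num.Theory.
Local Open Scope ring_scope.

Section CappedRatio.
Variable R : realFieldType.
Implicit Types L T P : R.

Definition capped_ratio T L : R := Num.min 1 (T / L).

Lemma capped_ratio_ge0 T L : 0 <= T -> 0 <= L -> 0 <= capped_ratio T L.
Proof. by move=> hT hL; rewrite le_min ler01 divr_ge0. Qed.

Lemma capped_ratio_le1 T L : capped_ratio T L <= 1.
Proof. by rewrite ge_min lexx. Qed.

Lemma capped_ratio_le T1 T2 L : 0 <= L -> T2 <= T1 ->
  capped_ratio T2 L <= capped_ratio T1 L.
Proof.
move=> hL h21; rewrite le_min ge_min lexx /= ge_min.
by rewrite ler_wpM2r ?invr_ge0 ?orbT.
Qed.

Lemma mulr_capped_ratio T L : 0 <= T -> 0 <= L ->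
  L * capped_ratio T L = Num.min L T.
Proof.
move=> hT hL; have [-> | hL0] := eqVneq L 0.
  by rewrite mul0r; apply/esym/min_idPl.
have divK : L * (T / L) = T by rewrite mulrCA divff ?mulr1.
have hLp : 0 < L by rewrite lt_def hL0.
rewrite /capped_ratio; case: (leP 1 (T / L)) => h.
- rewrite mulr1 min_l //.
  by rewrite -divK -{1}(mulr1 L) ler_wpM2l // ltW.
- rewrite divK min_r // ltW //.
  by rewrite -[X in X < _]divK -[X in _ < X]mulr1 ltr_pM2l.
Qed.

Lemma subr_min_pos L T : L - Num.min L T = Num.max (L - T) 0.
Proof.
case: (leP L T) => h; first by rewrite subrr max_r // subr_le0.
by rewrite max_l // subr_ge0 ltW.
Qed.

Lemma ler_min_diff L T1 T2 : T2 <= T1 ->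
  Num.min L T1 - Num.min L T2 <= T1 - T2.
Proof. by move=> h21; case: (leP L T1) => a; case: (leP L T2) => b; lra. Qed.

Lemma ler_mul_capped_ratio P T L : 0 <= P -> P <= L -> 0 <= T ->
  P * capped_ratio T L <= T.
Proof.
move=> hP hPL hT; have hL := le_trans hP hPL.
apply: le_trans (_ : L * capped_ratio T L <= T).
  by rewrite ler_wpM2r ?capped_ratio_ge0.
by rewrite mulr_capped_ratio // ge_min lexx orbT.
Qed.

End CappedRatio.

Section Thresholds.
Variables (R : realType) (delta : R) (m : nat).
Local Notation inPb := (inPb delta m).
Local Notation nextP := (nextP delta m).

Lemma inPb_leq ell : inPb ell -> (ell <= m)%N.
Proof. by move/asboolP=> [s E]; rewrite -lez_nat E ge_min lexx orbT. Qed.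

Lemma text_inPb (t : nat -> R) ell : inPb ell -> text m t ell = t ell.
Proof. by move/inPb_leq=> hell; rewrite /text ifN // ltn_eqF. Qed.

Lemma nextPP ell : nextP ell = m.+1 \/ inPb (nextP ell) /\ (ell < nextP ell)%N.
Proof.
rewrite /nextP; case: ifP => _; last by left.
case E: [seq k <- iota ell.+1 (m - ell) | inPb k] => [|a s]; first by left.
right => /=.
have : a \in [seq k <- iota ell.+1 (m - ell) | inPb k] by rewrite E mem_head.
by rewrite mem_filter mem_iota => /andP [-> /andP [h _]].
Qed.

Variable t : nat -> R.
Hypothesis t_valid : valid_threshold delta m t.

(* Descending along next from l reaches m+1, where t vanishes. *)
Lemma valid_threshold_ge0 ell : inPb ell -> 0 <= text m t ell.
Proof.
move: {2}(m.+1 - ell)%N (leqnn (m.+1 - ell)) => n.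
elim: n ell => [|n IHn] ell hn hP; first by have := inPb_leq hP; lia.
apply: le_trans (t_valid hP).
have [-> | [hnext hlt]] := nextPP ell; first by rewrite /text eqxx.
by apply: IHn hnext; have := inPb_leq hP; lia.
Qed.

Lemma valid_threshold_next_ge0 ell : inPb ell -> 0 <= text m t (nextP ell).
Proof.
move=> hP; have [-> | [hnext _]] := nextPP ell; first by rewrite /text eqxx.
exact: valid_threshold_ge0.
Qed.

End Thresholds.

Section IntegralSolution.
Variables (R : realType) (delta : R) (m : nat) (J : finType).
Variables (p : 'I_m -> J -> R) (t : nat -> R) (sigma : J -> 'I_m).
Hypothesis p_ge0 : forall i j, 0 <= p i j.
Hypothesis t_valid : valid_threshold delta m t.
Local Notation inPb := (inPb delta m).
Local Notation nextP := (nextP delta m).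
Local Notation load := (load p sigma).

Definition assign_x (i : 'I_m) (j : J) : R := (sigma j == i)%:R.

Definition below_frac (ell : nat) (i : 'I_m) : R := capped_ratio (text m t ell) (load i).

Definition split_z (ell : nat) (i : 'I_m) (j : J) : R := assign_x i j * below_frac ell i.

Definition split_y (ell : nat) (i : 'I_m) (j : J) : R :=
  assign_x i j * (1 - below_frac ell i).

Lemma assign_x_ge0 i j : 0 <= assign_x i j.
Proof. exact: ler0n. Qed.

Lemma sum_assign_x j : \sum_(i < m) assign_x i j = 1.
Proof.
rewrite (bigD1 (sigma j)) //= /assign_x eqxx big1 ?addr0 // => i hi.
by rewrite eq_sym (negbTE hi).
Qed.

Lemma load_ge0 i : 0 <= load i.
Proof. exact: sumr_ge0. Qed.

Lemma ler_load i j : sigma j = i -> p i j <= load i.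
Proof.
move=> hj; rewrite /load (bigD1 j) /= ?hj // lerDl.
exact: sumr_ge0.
Qed.

Lemma sum_p_assign_x i (k : R) : \sum_j p i j * (assign_x i j * k) = load i * k.
Proof.
rewrite /load mulr_suml [RHS]big_mkcond /=; apply: eq_bigr => j _.
by rewrite /assign_x; case: eqP => _; rewrite ?mul1r ?mul0r ?mulr0.
Qed.

Lemma below_frac_ge0 ell i : inPb ell -> 0 <= below_frac ell i.
Proof. by move=> hP; rewrite capped_ratio_ge0 ?load_ge0 ?(valid_threshold_ge0 t_valid hP). Qed.

Lemma zext_split_z ell i j : zext split_z ell i j = split_z ell i j.
Proof.
rewrite /zext; case: eqP => // ->.
by rewrite /split_z /below_frac /capped_ratio /text eqxx mul0r min_r ?ler01 ?mulr0.
Qed.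

Lemma split_feasible : OLB_feasible delta p t assign_x split_y split_z.
Proof.
split.
- split=> [|ell i j hP]; first exact: assign_x_ge0.
  by rewrite !mulr_ge0 ?assign_x_ge0 ?below_frac_ge0 ?subr_ge0 ?capped_ratio_le1.
- by split=> [|ell i j _]; [exact: sum_assign_x | rewrite /split_z /split_y; ring].
- move=> ell i j hP; rewrite zext_split_z ler_wpM2l ?assign_x_ge0 //.
  exact: capped_ratio_le (load_ge0 i) (t_valid hP).
- move=> ell i hP; under eq_bigr => j _ do rewrite zext_split_z -mulrBr.
  rewrite sum_p_assign_x mulrBr !mulr_capped_ratio ?load_ge0
    ?(valid_threshold_ge0 t_valid hP) ?(valid_threshold_next_ge0 t_valid hP) //.
  exact/ler_min_diff/t_valid.
- move=> ell i j hP; rewrite /split_y /assign_x.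
  have [hj | _] := eqVneq (sigma j) i; last by rewrite !mul0r !mulr0.
  have := ler_mul_capped_ratio (p_ge0 i j) (ler_load hj) (valid_threshold_ge0 t_valid hP).
  rewrite -/(below_frac ell i) (text_inPb t hP) mul1r mulr1 => hbelow.
  lra.
Qed.

Lemma LP_obj_split (wt : nat -> R) :
  LP_obj delta p wt split_y = \sum_(i < m) h_t delta m t wt (load i).
Proof.
apply: eq_bigr => i _; apply: eq_bigr => ell hP.
under eq_bigr => j _ do rewrite -mulrA.
rewrite -mulr_sumr sum_p_assign_x mulrBr mulr1 mulr_capped_ratio ?load_ge0
  ?(valid_threshold_ge0 t_valid hP) //.
by rewrite subr_min_pos (text_inPb t hP).
Qed.

End IntegralSolution.

Theorem mainTheorem15 (R : realType) (delta : R) (m : nat) (J : finType)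
  (p : 'I_m -> J -> R) (t w : nat -> R) (sigma : J -> 'I_m) :
  0 < delta -> (0 < m)%N ->
  (forall i j, 0 <= p i j) ->
  valid_threshold delta m t ->
  weight_vector m w ->
  exists (x : 'I_m -> J -> R) (y z : nat -> 'I_m -> J -> R),
    OLB_feasible delta p t x y z /\
    LP_obj delta p (sparsify delta m w) y
      <= \sum_(i < m) h_t delta m t (sparsify delta m w) (load p sigma i).
Proof.
move=> _ _ p_ge0 t_valid _.
exists (assign_x R sigma), (split_y p t sigma), (split_z p t sigma).
by split; [exact: split_feasible | rewrite LP_obj_split].
Qed.
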